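(* In the setting of OGP (with $\eta>0$, $\widetilde x_1\in C$, arbitrary predictions $\widehat x_t^*\in H$, and updates $\widetilde{x}_{t+1}=P_C(\widetilde{x}_t-\eta x_t^* )$, $x_t^*\in\partial\varphi_t(x_t)$, $x_{t+1}=P_C(\widetilde{x}_{t+1}-\eta\widehat{x}_{t+1}^* )$), for every $T\ge1$ and every $z_1,\dots,z_T\in C$, $$\sum_{t=1}^T\varphi_t(x_t)-\sum_{t=1}^T\varphi_t(z_t)\le \frac{\rho^2}{2\eta}+\frac{\rho}{\eta}\sum_{t=2}^T\|z_t-z_{t-1}\|+\frac{\eta}{2}\sum_{t=1}^T h_{\|x_t^*\|}\big(\|x_t^*-\widehat{x}_t^*\|\big),$$ where $h_\sigma(\delta)=\delta^2-(|\delta|-|\sigma|)_+^2$ and $(a)_+=\max\{a,0\}$.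
   Context: $H$ is a real Hilbert space; $C\subset H$ is nonempty, closed, convex with diameter $\rho=\sup_{x,y\in C}\|x-y\|<\infty$; $P_C$ is the metric projection onto $C$; each $\varphi_t$ is convex with $C\subset\operatorname{dom}\partial\varphi_t$, and $\partial$ is the subdifferential. *)

From HB Require Import structures.
From mathcomp Require Import all_boot all_order all_algebra.
From mathcomp Require Import all_classical all_reals all_analysis.
Set Implicit Arguments. Unset Strict Implicit. Unset Printing Implicit Defensive.
Import Order.TTheory GRing.Theory Num.Theory.
Import numFieldNormedType.Exports.
Local Open Scope classical_set_scope.
Local Open Scope ring_scope.

(* A real inner product on the normed module V inducing its norm:
   (V, ip) together with completeness of V is a real Hilbert space. *)
Definition is_inner_product (R : realType) (V : normedModType R)
  (ip : V -> V -> R) : Prop :=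
  [/\ (forall x y, ip x y = ip y x),
      (forall a x y z, ip (a *: x + y) z = a * ip x z + ip y z) &
      (forall x, ip x x = `|x| ^+ 2)].

Definition is_convex_set (R : realType) (V : normedModType R) (C : set V) : Prop :=
  forall x y (l : R), C x -> C y -> 0 <= l <= 1 -> C (l *: x + (1 - l) *: y).

Definition convex_efun (R : realType) (V : normedModType R)
  (f : V -> \bar R) : Prop :=
  (forall x, f x != -oo)%E /\
  forall (x y : V) (l : R), (0 <= l <= 1)%R ->
    (f (l *: x + (1 - l) *: y)%R <= l%:E * f x + (1 - l)%:E * f y)%E.

Definition subdiff (R : realType) (V : normedModType R)
  (ip : V -> V -> R) (f : V -> \bar R) (x : V) : set V :=
  [set g | f x \is a fin_num /\ forall y, (f x + (ip g (y - x)%R)%:E <= f y)%E].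

Definition dom_subdiff (R : realType) (V : normedModType R)
  (ip : V -> V -> R) (f : V -> \bar R) : set V :=
  [set x | subdiff ip f x !=set0].

Definition is_metric_projection (R : realType) (V : normedModType R)
  (C : set V) (P : V -> V) : Prop :=
  forall x, C (P x) /\ forall y, C y -> `|x - P x| <= `|x - y|.

Definition diameter (R : realType) (V : normedModType R) (C : set V) : R :=
  sup [set `|x - y| | x in C & y in C].

Definition posp (R : realType) (a : R) : R := Num.max a 0.

Definition hfun (R : realType) (sigma delta : R) : R :=
  delta ^+ 2 - (posp (`|delta| - `|sigma|)) ^+ 2.

From HB Require Import structures.
From mathcomp Require Import all_boot all_order all_algebra.
From mathcomp Require Import all_classical all_reals all_analysis.
From mathcomp Require Import ring lra.
Set Implicit Arguments. Unset Strict Implicit. Unset Printing Implicit Defensive.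
Import Order.TTheory GRing.Theory Num.Theory.
Import numFieldNormedType.Exports.
Local Open Scope classical_set_scope.
Local Open Scope ring_scope.

(* Write p = x~_t, g = x*_t, m = hat x*_t, q = x~_(t+1) = P(p - eta g) and
   r = x_t = P(p - eta m). The obtuse-angle property of the projection gives the
   three-point inequality 2 eta <g, P(p - eta g) - w> <= |p - w|^2 - |P(p - eta g) - w|^2
   - |p - P(p - eta g)|^2 for every w in C. Used with w = z, with w = p (so that
   |p - q| <= eta |g|) and, for the step along m, with w = q, and combined with
   Cauchy-Schwarz and |r - q| <= |r - p| + |p - q|, it reduces the one-step bound
     eta <g, r - z> <= (|p - z|^2 - |q - z|^2) / 2 + eta^2 / 2 h_|g|(|g - m|)
   to an inequality between five real numbers. The subgradient inequality bounds
   phi_t(x_t) - phi_t(z_t) by <g, r - z>, and summing over t the distance terms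
   telescope to at most rho^2 + 2 rho sum_t |z_t - z_(t-1)|. *)

Section ScalarBounds.
Variable R : realType.

Lemma le_mul_sub_half_sqr (a b S rho U F : R) :
  0 <= a -> a <= b -> 0 <= S -> 0 <= rho -> 0 <= U -> U <= a -> S <= rho + U ->
  F <= b * S - S ^+ 2 / 2 - rho ^+ 2 / 2 -> F <= a * S - U ^+ 2 / 2 ->
  F <= a * b - a ^+ 2 / 2.
Proof.
move=> a0 ab S0 rho0 U0 Ua SrU Fb Fa.
have [Sa|aS] := lerP S a; first by nra.
have [a_eq0|a_neq0] := eqVneq a 0.
  have U_eq0 : U = 0 by lra.
  by subst a U; nra.
have a_gt0 : 0 < a by rewrite lt_def a_neq0 a0.
have rho_sqr : (S - U) ^+ 2 <= rho ^+ 2 by nra.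
(* The weights S - a and a combine the two bounds into S (a - U)^2 / 2 >= 0. *)
have weights : (S - a) * (a * b - a ^+ 2 / 2 - (a * S - U ^+ 2 / 2))
    + a * (a * b - a ^+ 2 / 2 - (b * S - S ^+ 2 / 2 - (S - U) ^+ 2 / 2))
  = S * (a - U) ^+ 2 / 2 by field.
rewrite leNgt; apply/negP => Fgt.
have wa : (S - a) * (a * b - a ^+ 2 / 2 - (a * S - U ^+ 2 / 2)) <= 0.
  by apply: mulr_ge0_le0; lra.
have wb : a * (a * b - a ^+ 2 / 2 - (b * S - S ^+ 2 / 2 - (S - U) ^+ 2 / 2)) < 0.
  by rewrite pmulr_rlt0 //; lra.
have : 0 <= S * (a - U) ^+ 2 / 2 by rewrite divr_ge0 // mulr_ge0 // sqr_ge0.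
lra.
Qed.

Lemma le_hfun_of_bounds (eta sg dl S rho U F : R) :
  0 < eta -> 0 <= sg -> 0 <= dl -> 0 <= S -> 0 <= rho -> 0 <= U ->
  U <= eta * sg -> S <= rho + U ->
  F <= eta * dl * S - S ^+ 2 / 2 - rho ^+ 2 / 2 -> F <= eta * sg * S - U ^+ 2 / 2 ->
  F <= eta ^+ 2 / 2 * hfun sg dl.
Proof.
move=> eta_gt0 sg0 dl0 S0 rho0 U0 Ueta SrU Fdl Fsg.
rewrite /hfun /posp (ger0_norm sg0) (ger0_norm dl0).
have [dl_le|sg_lt] := lerP dl sg.
  rewrite max_r; last by lra.
  rewrite expr0n /= subr0.
  have := sqr_ge0 (eta * dl - S); have := sqr_ge0 rho; nra.
rewrite max_l; last by lra.
have -> : eta ^+ 2 / 2 * (dl ^+ 2 - (dl - sg) ^+ 2)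
  = eta * sg * (eta * dl) - (eta * sg) ^+ 2 / 2 by field.
by apply: (le_mul_sub_half_sqr (S := S) (rho := rho) (U := U)); nra.
Qed.

End ScalarBounds.

Section InnerProduct.
Variables (R : realType) (V : normedModType R) (ip : V -> V -> R).
Hypothesis ip_inner : is_inner_product ip.

Lemma ipC x y : ip x y = ip y x. Proof. by case: ip_inner. Qed.
Lemma ip_norm x : ip x x = `|x| ^+ 2. Proof. by case: ip_inner. Qed.
Lemma ipZDl a x y z : ip (a *: x + y) z = a * ip x z + ip y z.
Proof. by case: ip_inner. Qed.

Lemma ip0l z : ip 0 z = 0.
Proof. by have := ipZDl 1 0 0 z; rewrite scaler0 addr0 mul1r; lra. Qed.
Lemma ipDl x y z : ip (x + y) z = ip x z + ip y z.
Proof. by rewrite -[x in LHS]scale1r ipZDl mul1r. Qed.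
Lemma ipZl a x z : ip (a *: x) z = a * ip x z.
Proof. by rewrite -[_ *: x]addr0 ipZDl ip0l addr0. Qed.
Lemma ipNl x z : ip (- x) z = - ip x z.
Proof. by rewrite -scaleN1r ipZl mulN1r. Qed.
Lemma ipBl x y z : ip (x - y) z = ip x z - ip y z.
Proof. by rewrite ipDl ipNl. Qed.
Lemma ipDr x y z : ip z (x + y) = ip z x + ip z y.
Proof. by rewrite ipC ipDl !(ipC _ z). Qed.
Lemma ipZr a x z : ip z (a *: x) = a * ip z x.
Proof. by rewrite ipC ipZl ipC. Qed.
Lemma ipNr x z : ip z (- x) = - ip z x.
Proof. by rewrite ipC ipNl ipC. Qed.

Lemma normD2 x y : `|x + y| ^+ 2 = `|x| ^+ 2 + 2 * ip x y + `|y| ^+ 2.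
Proof. by rewrite -!ip_norm ipDl !ipDr (ipC y x); ring. Qed.
Lemma normB2 x y : `|x - y| ^+ 2 = `|x| ^+ 2 - 2 * ip x y + `|y| ^+ 2.
Proof. by rewrite normD2 ipNr normrN; ring. Qed.

Lemma three_point x y w :
  2 * ip (x - y) (y - w) = `|x - w| ^+ 2 - `|y - w| ^+ 2 - `|x - y| ^+ 2.
Proof. by rewrite -[x - w](subrKA y) normD2; ring. Qed.

Lemma cauchy_schwarz x y : ip x y <= `|x| * `|y|.
Proof.
have [->|x_neq0] := eqVneq x 0; first by rewrite ip0l normr0 mul0r.
have [->|y_neq0] := eqVneq y 0; first by rewrite ipC ip0l normr0 mulr0.
have a_gt0 : 0 < `|x| by rewrite normr_gt0.
have b_gt0 : 0 < `|y| by rewrite normr_gt0.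
have := sqr_ge0 `| `|y| *: x - `|x| *: y|.
rewrite normB2 ipZl ipZr !normrZ !normr_id.
set a := `|x| in a_gt0 *; set b := `|y| in b_gt0 *.
have : 0 < a * b by rewrite mulr_gt0.
nra.
Qed.

Lemma subdiff_fine_le (f : V -> \bar R) x g y :
  subdiff ip f x g -> f y \is a fin_num ->
  fine (f x) - fine (f y) <= ip g (x - y).
Proof.
move=> [fx_fin subgrad] fy_fin; have := subgrad y.
rewrite -[f x]fineK // -[f y]fineK //= -EFinD lee_fin -[y - x]opprB ipNr.
lra.
Qed.

Variables (C : set V) (P : V -> V).
Hypotheses (C_convex : is_convex_set C) (P_proj : is_metric_projection C P).

Lemma metric_projection_obtuse x w : C w -> ip (x - P x) (w - P x) <= 0.
Proof.
move=> Cw; have [CPx P_min] := P_proj x.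
set p := P x in CPx P_min *; set c := ip (x - p) (w - p).
have B_ge0 : 0 <= `|w - p| ^+ 2 by apply: sqr_ge0.
set B := `|w - p| ^+ 2 in B_ge0 *.
rewrite leNgt; apply/negP => c_gt0.
(* Moving from p towards w by the step l = c / (B + c) strictly decreases |x - .|. *)
set l := c / (B + c).
have lBc : l * (B + c) = c by rewrite /l mulfVK // gt_eqF //; lra.
have l_gt0 : 0 < l by rewrite /l divr_gt0 //; lra.
have l_le1 : l <= 1 by rewrite /l ler_pdivrMr ?mul1r; lra.
have := P_min _ (C_convex (l := l) Cw CPx ltac:(rewrite (ltW l_gt0) l_le1)).
have -> : x - (l *: w + (1 - l) *: p) = (x - p) - l *: (w - p).
  by rewrite scalerBl scale1r scalerBr addrCA opprD addrA.
move=> min_le.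
have : `|x - p| ^+ 2 <= `|x - p - l *: (w - p)| ^+ 2.
  by have := normr_ge0 (x - p); nra.
rewrite (normB2 (x - p)) ipZr normrZ (ger0_norm (ltW l_gt0)) -/c exprMn -/B.
nra.
Qed.

Lemma projected_step_three_point (eta : R) x g w : C w ->
  2 * eta * ip g (P (x - eta *: g) - w)
  <= `|x - w| ^+ 2 - `|P (x - eta *: g) - w| ^+ 2 - `|x - P (x - eta *: g)| ^+ 2.
Proof.
move=> Cw; have := metric_projection_obtuse (x - eta *: g) Cw.
set y := P (x - eta *: g).
rewrite -three_point [x - _ - y]addrAC -[w - y]opprB ipNr [ip (x - y - _) _]ipBl ipZl.
lra.
Qed.

Lemma optimistic_step (eta : R) p g m z : 0 < eta -> C p -> C z ->
  eta * ip g (P (p - eta *: m) - z)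
  <= (`|p - z| ^+ 2 - `|P (p - eta *: g) - z| ^+ 2) / 2
     + eta ^+ 2 / 2 * hfun `|g| `|g - m|.
Proof.
move=> eta_gt0 Cp Cz.
have Cq : C (P (p - eta *: g)) by case: (P_proj (p - eta *: g)).
have step_z := projected_step_three_point eta p g Cz.
have step_p := projected_step_three_point eta p g Cp.
have step_q := projected_step_three_point eta p m Cq.
set q := P (p - eta *: g) in Cq step_z step_p step_q *.
set r := P (p - eta *: m) in step_q *.
rewrite subrr normr0 expr0n /= sub0r (distrC q) -[q - p]opprB ipNr in step_p.
have cs_g := ler_wpM2l (ltW eta_gt0) (cauchy_schwarz g (r - q)).
have cs_gm := ler_wpM2l (ltW eta_gt0) (cauchy_schwarz (g - m) (r - q)).
rewrite ipBl in cs_gm.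
have cs_p := ler_wpM2l (ltW eta_gt0) (cauchy_schwarz g (p - q)).
have tri : `|r - q| <= `|p - r| + `|p - q| by rewrite (distrC p); apply: ler_distD.
have split_z : ip g (r - z) = ip g (r - q) + ip g (q - z).
  by rewrite -ipDr subrKA.
move: (normr_ge0 (r - q)) (normr_ge0 (p - r)) (normr_ge0 (p - q)) => S0 rho0 U0.
move: (normr_ge0 g) (normr_ge0 (g - m)) => sg0 dl0.
have U_le : `|p - q| <= eta * `|g|.
  have [->|U_neq0] := eqVneq `|p - q| 0; first by rewrite mulr_ge0 // ltW.
  have U_gt0 : 0 < `|p - q| by rewrite lt_def U_neq0 U0.
  by rewrite -(ler_pM2r U_gt0); nra.
rewrite split_z.
suff : eta * (ip g (r - q) + ip g (q - z))
         - (`|p - z| ^+ 2 - `|q - z| ^+ 2) / 2 <= eta ^+ 2 / 2 * hfun `|g| `|g - m|.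
  by lra.
by apply: (le_hfun_of_bounds eta_gt0 sg0 dl0 S0 rho0 U0 U_le tri); lra.
Qed.

End InnerProduct.

Lemma dist_le_diameter (R : realType) (V : normedModType R) (C : set V) (M : R) u v :
  (forall u v, C u -> C v -> `|u - v| <= M) -> C u -> C v -> `|u - v| <= diameter C.
Proof.
move=> bounded Cu Cv; apply: ub_le_sup; last by exists u => //; exists v.
by exists M => _ [a Ca [b Cb <-]]; apply: bounded.
Qed.

Lemma fin_num_sumE (R : realType) (F : nat -> \bar R) m n :
  (forall t, (m <= t < n)%N -> F t \is a fin_num) ->
  (\sum_(m <= t < n) F t = (\sum_(m <= t < n) fine (F t))%:E)%E.
Proof. by move=> F_fin; rewrite -sumEFin; apply: eq_big_nat => t /F_fin/fineK. Qed.

Lemma telescope_drift_le (R : realType) (V : normedModType R) (y z : nat -> V) (D : R) T :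
  (forall t, (1 <= t <= T)%N -> `|y t - z t| <= D) ->
  (forall t, (2 <= t <= T)%N -> `|y t - z t.-1| <= D) ->
  forall n, (1 <= n <= T)%N ->
  \sum_(1 <= t < n.+1) (`|y t - z t| ^+ 2 - `|y t.+1 - z t| ^+ 2)
  <= D ^+ 2 + 2 * D * (\sum_(2 <= t < n.+1) `|z t - z t.-1|) - `|y n.+1 - z n| ^+ 2.
Proof.
move=> le_same le_prev; elim=> [//|n IH] /andP[_ nT].
have [n0|n_neq0] := eqVneq n 0%N.
  subst n; rewrite big_nat1 big_geq // mulr0 addr0.
  by have := le_same 1%N nT; have := normr_ge0 (y 1%N - z 1%N); nra.
have {IH} := IH ltac:(by rewrite lt0n n_neq0 ltnW).
rewrite (@big_nat_recr _ _ _ n.+1 1%N) // (@big_nat_recr _ _ _ n.+1 2%N) 1?ltnS ?lt0n //=.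
set A := `|y n.+1 - z n.+1|; set B := `|y n.+1 - z n|; set c := `|z n.+1 - z n|.
have A_le : A <= D by apply: le_same; rewrite nT.
have B_le : B <= D by apply: le_prev; rewrite nT ltnS lt0n n_neq0.
have AB_le : A <= B + c by rewrite /A /B /c (distrC (z n.+1)); apply: ler_distD.
have [A0 B0 c0] : [/\ 0 <= A, 0 <= B & 0 <= c] by rewrite !normr_ge0.
have : A ^+ 2 - B ^+ 2 <= 2 * D * c.
  have : (A + B) * (A - B) <= (A + B) * c by apply: ler_wpM2l; lra.
  have : (A + B) * c <= 2 * D * c by apply: ler_wpM2r; lra.
  nra.
lra.
Qed.

Section OptimisticGradient.
Variables (R : realType) (V : normedModType R) (ip : V -> V -> R).
Variables (C : set V) (P : V -> V) (phi : nat -> V -> \bar R) (eta : R).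
Variables (xt x xs xh : nat -> V).
Hypotheses (ip_inner : is_inner_product ip) (C_convex : is_convex_set C).
Hypotheses (P_proj : is_metric_projection C P) (eta_gt0 : 0 < eta) (C_xt1 : C (xt 1%N)).
Hypothesis xs_subgrad : forall t, (1 <= t)%N -> subdiff ip (phi t) (x t) (xs t).
Hypothesis xt_next : forall t, (1 <= t)%N -> xt t.+1 = P (xt t - eta *: xs t).
Hypothesis x_pred : forall t, (1 <= t)%N -> x t = P (xt t - eta *: xh t).

Lemma ogp_iterate_in t : (1 <= t)%N -> C (xt t).
Proof.
elim: t => [//|[//|t] IH _].
by rewrite xt_next //; case: (P_proj (xt t.+1 - eta *: xs t.+1)).
Qed.

Lemma ogp_step_le t w : (1 <= t)%N -> C w -> phi t w \is a fin_num ->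
  fine (phi t (x t)) - fine (phi t w)
  <= (`|xt t - w| ^+ 2 - `|xt t.+1 - w| ^+ 2) / (2 * eta)
     + eta / 2 * hfun `|xs t| `|xs t - xh t|.
Proof.
move=> t1 Cw w_fin.
have gap := ler_wpM2l (ltW eta_gt0) (subdiff_fine_le ip_inner (xs_subgrad t1) w_fin).
have := optimistic_step ip_inner C_convex P_proj (xs t) (xh t) eta_gt0 (ogp_iterate_in t1) Cw.
rewrite -x_pred // -xt_next // => step.
have -> : (`|xt t - w| ^+ 2 - `|xt t.+1 - w| ^+ 2) / (2 * eta)
    + eta / 2 * hfun `|xs t| `|xs t - xh t|
  = ((`|xt t - w| ^+ 2 - `|xt t.+1 - w| ^+ 2) / 2
     + eta ^+ 2 / 2 * hfun `|xs t| `|xs t - xh t|) / eta.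
  by field; rewrite gt_eqF.
by rewrite ler_pdivlMr //; lra.
Qed.

Lemma ogp_regret_le T z D : (1 <= T)%N ->
  (forall t, (1 <= t <= T)%N -> C (z t)) ->
  (forall t, (1 <= t <= T)%N -> phi t (z t) \is a fin_num) ->
  (forall u v, C u -> C v -> `|u - v| <= D) ->
  \sum_(1 <= t < T.+1) (fine (phi t (x t)) - fine (phi t (z t)))
  <= D ^+ 2 / (2 * eta) + D / eta * (\sum_(2 <= t < T.+1) `|z t - z t.-1|)
     + eta / 2 * (\sum_(1 <= t < T.+1) hfun `|xs t| `|xs t - xh t|).
Proof.
move=> T_ge1 Cz z_fin diamD.
have per_step t : (1 <= t < T.+1)%N -> _ := fun tT =>
  ogp_step_le (proj1 (andP tT)) (Cz t tT) (z_fin t tT).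
apply: le_trans (ler_sum_nat per_step) _.
rewrite big_split /= -mulr_suml -mulr_sumr lerD2r.
have le_same t : (1 <= t <= T)%N -> `|xt t - z t| <= D.
  by move=> tT; apply: diamD; [apply: ogp_iterate_in; case/andP: tT | apply: Cz].
have le_prev t : (2 <= t <= T)%N -> `|xt t - z t.-1| <= D.
  case/andP=> t2 tT; apply: diamD; first by apply: ogp_iterate_in; apply: ltnW.
  by apply: Cz; rewrite -ltnS (ltn_predK t2) t2 (leq_trans (leq_pred t)).
have := telescope_drift_le le_same le_prev (n := T) ltac:(by rewrite T_ge1 leqnn).
have := sqr_ge0 `|xt T.+1 - z T|.
have -> : D ^+ 2 / (2 * eta) + D / eta * (\sum_(2 <= t < T.+1) `|z t - z t.-1|)
  = (D ^+ 2 + 2 * D * (\sum_(2 <= t < T.+1) `|z t - z t.-1|)) / (2 * eta).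
  by field; rewrite gt_eqF.
move=> tail_ge0 drift; apply: ler_wpM2r; last by lra.
by rewrite invr_ge0 mulr_ge0 // ltW.
Qed.

End OptimisticGradient.

Theorem corollary1 (R : realType) (V : completeNormedModType R)
  (ip : V -> V -> R) (C : set V) (P : V -> V) (phi : nat -> V -> \bar R)
  (eta : R) (xt x xs xh : nat -> V) (T : nat) (z : nat -> V) :
  is_inner_product ip ->
  C !=set0 -> closed C -> is_convex_set C ->
  (exists M : R, forall u v, C u -> C v -> `|u - v| <= M) ->
  is_metric_projection C P ->
  (forall t, convex_efun (phi t)) ->
  (forall t, C `<=` dom_subdiff ip (phi t)) ->
  0 < eta ->
  C (xt 1%N) ->
  (forall t, (1 <= t)%N -> subdiff ip (phi t) (x t) (xs t)) ->
  (forall t, (1 <= t)%N -> xt t.+1 = P (xt t - eta *: xs t)) ->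
  (forall t, (1 <= t)%N -> x t = P (xt t - eta *: xh t)) ->
  (1 <= T)%N ->
  (forall t, (1 <= t <= T)%N -> C (z t)) ->
  ((\sum_(1 <= t < T.+1) phi t (x t)) - (\sum_(1 <= t < T.+1) phi t (z t))
   <= ((diameter C) ^+ 2 / (2 * eta)
       + (diameter C) / eta * (\sum_(2 <= t < T.+1) `|z t - z t.-1|)
       + eta / 2 * (\sum_(1 <= t < T.+1) hfun `|xs t| `|xs t - xh t|))%:E)%E.
Proof.
move=> ip_inner _ _ C_convex [M C_bounded] P_proj _ C_dom eta_gt0 C_xt1
  xs_subgrad xt_next x_pred T_ge1 Cz.
have x_fin t : (1 <= t < T.+1)%N -> phi t (x t) \is a fin_num.
  by case/andP=> t1 _; case: (xs_subgrad t t1).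
have z_fin t : (1 <= t < T.+1)%N -> phi t (z t) \is a fin_num.
  by move=> tT; have [_ [fin_zt _]] := C_dom t _ (Cz t tT).
rewrite (fin_num_sumE x_fin) (fin_num_sumE z_fin) -EFinB lee_fin -sumrB.
apply: (ogp_regret_le ip_inner C_convex P_proj eta_gt0 C_xt1 xs_subgrad xt_next x_pred
  T_ge1 Cz z_fin).
by move=> u v; apply: dist_le_diameter C_bounded.
Qed.
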